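(* Let $\mathcal{M}=(E,\mathcal{I})$ be a matroid with rank function $r_{\mathcal{M}}$ and $E=\{e_1,\dots,e_n\}$, let $E_0$ be its set of loops, and let $E_1,\dots,E_k$ and $r_1,\dots,r_k$ be the ground sets and ranks of the principal minors of $\mathcal{M}\setminus E_0$. Let $\mathcal{P}$ be the partition matroid on $E$, with rank function $r_{\mathcal{P}}$, whose independent sets are the sets $\bigcup_{i=1}^k I_i$ with $I_i\subseteq E_i$ and $|I_i|\leq r_i$. Let $\sigma$ be a uniformly random permutation of $[n]$ and for $1\leq j\leq n$ let $A^\sigma_j=\{e_{\sigma(1)},\dots,e_{\sigma(j)}\}$. Then for every $1\leq j\leq n$, $$\mathbb{E}_\sigma[r_{\mathcal{P}}(A^\sigma_j)]\geq(1-1/e)\,\mathbb{E}_\sigma[r_{\mathcal{M}}(A^\sigma_j)].$$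
   Context: Principal sequence: for a loopless matroid $\mathcal{N}$ on ground set $S$ with rank function $r$, there are unique sets $\emptyset=F_0\subsetneq F_1\subsetneq\dots\subsetneq F_k=S$ and values $\infty>\lambda_1>\dots>\lambda_k\geq 1$ such that $\lambda_1,\dots,\lambda_k$ are exactly the values $\lambda$ for which $f_\lambda(X)=\lambda r(X)-|X|$ ($X\subseteq S$) has more than one minimizer, and the unique minimal and maximal minimizers of $f_{\lambda_i}$ are $F_{i-1}$ and $F_i$. The principal minors are $\mathcal{M}_i=(\mathcal{N}/F_{i-1})|_{E_i}$ with ground set $E_i=F_i\setminus F_{i-1}$ and rank $r_i$. *)

From mathcomp Require Import all_boot all_order all_algebra.
From mathcomp Require Import fingroup perm reals sequences exp.
Set Implicit Arguments. Unset Strict Implicit. Unset Printing Implicit Defensive.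
Import Order.TTheory GRing.Theory Num.Theory.
Local Open Scope ring_scope.

Section Matroids.
Variable T : finType.

Definition is_matroid (indep : {set T} -> bool) : Prop :=
  [/\ indep set0,
      (forall I J : {set T}, J \subset I -> indep I -> indep J) &
      (forall I J : {set T}, indep I -> indep J -> (#|I| < #|J|)%N ->
         exists2 x, x \in J :\: I & indep (x |: I))].

Definition mrank (indep : {set T} -> bool) (X : {set T}) : nat :=
  \max_(I : {set T} | indep I && (I \subset X)) #|I|.

Definition loops (indep : {set T} -> bool) : {set T} :=
  [set x | ~~ indep [set x]].

Definition flam (R : realType) (r : {set T} -> nat) (lam : R) (X : {set T}) : R :=
  lam * (r X)%:R - (#|X|)%:R.

Definition minimizer (R : realType) (S : {set T}) (r : {set T} -> nat)
    (lam : R) (X : {set T}) : Prop :=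
  X \subset S /\ forall Y : {set T}, Y \subset S -> flam r lam X <= flam r lam Y.

(* (F_0..F_k, lambda_1..lambda_k) is the principal sequence of the loopless
   matroid on ground set S with rank function r (indices 1..k for lambda). *)
Definition principal_sequence (R : realType) (S : {set T}) (r : {set T} -> nat)
    (k : nat) (F : nat -> {set T}) (lam : nat -> R) : Prop :=
  [/\ F 0%N = set0, F k = S,
      (forall i, (i < k)%N -> F i \proper F i.+1) &
      (forall i, (1 <= i)%N -> (i < k)%N -> lam i.+1 < lam i)] /\
  ((0 < k)%N -> 1 <= lam k) /\
  (forall l : R,
     (exists X Y, [/\ minimizer S r l X, minimizer S r l Y & X != Y]) <->
     (exists2 i, (1 <= i <= k)%N & l = lam i)) /\
  (forall i, (1 <= i <= k)%N ->
     [/\ minimizer S r (lam i) (F i.-1), minimizer S r (lam i) (F i) &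
         forall X, minimizer S r (lam i) X -> (F i.-1 \subset X) && (X \subset F i)]).

(* Rank of the principal minor M_i = (N / F_{i-1}) | E_i evaluated on X. *)
Definition minor_rank (r : {set T} -> nat) (F : nat -> {set T}) (i : nat)
    (X : {set T}) : nat :=
  (r (X :|: F i.-1) - r (F i.-1))%N.

Definition minor_ground (F : nat -> {set T}) (i : nat) : {set T} := F i :\: F i.-1.

Definition partition_indep (k : nat) (E : nat -> {set T}) (rk : nat -> nat)
    (I : {set T}) : bool :=
  [exists Is : {ffun 'I_k -> {set T}},
     (I == \bigcup_(i : 'I_k) Is i) &&
     [forall i : 'I_k, (Is i \subset E i.+1) && (#|Is i| <= rk i.+1)%N]].

End Matroids.

(* A^sigma_j = {e_sigma(1), ..., e_sigma(j)} (0-indexed ordinals). *)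
Definition prefix_set (n : nat) (T : finType) (e : 'I_n -> T) (s : 'S_n) (j : nat)
  : {set T} := [set e (s i) | i : 'I_n & (i < j)%N].

Definition Eperm (R : realType) (n : nat) (f : 'S_n -> R) : R :=
  (\sum_(s : 'S_n) f s) / (n`!)%:R.

From mathcomp Require Import all_boot all_order all_algebra.
From mathcomp Require Import fingroup perm reals sequences exp.
From mathcomp Require Import interval_inference convex ring lra zify.
Import Order.TTheory GRing.Theory Num.Theory.
Local Open Scope ring_scope.
Set Implicit Arguments. Unset Strict Implicit. Unset Printing Implicit Defensive.

(* Put [p = j / n] and let [S] be the set of non-loops.  For every [i],
   [r(A) <= r(F_i) + |A :&: (S :\: F_i)|], hence
   [E r_M(A_j) <= r(F_i) + p |S :\: F_i|].  The partition matroid has rank at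
   least [sum_l min(|A :&: E_l|, r_l)], and for a uniformly random prefix
   [E min(|A_j :&: X|, r) >= (1 - 1/e) min(p |X|, r)]: the expected shortfall
   from [r] shrinks by a factor [1 - |X| / (r n)] with each new element.
   Finally [r_l / |E_l| = 1 / lam_l] increases along the principal sequence,
   so [sum_l min(p |E_l|, r_l) = r(F_i) + p |S :\: F_i|] where [i] is the last
   index with [p lam_i >= 1]. *)

Section PrefixCount.
Variables (T : finType) (n : nat) (e : 'I_n -> T).
Implicit Types (s : 'S_n) (X : {set T}).

Definition prefix_count (s : 'S_n) (t : nat) (X : {set T}) : nat :=
  \sum_(i < n | (i < t)%N) (e (s i) \in X).

Lemma prefix_count0 s X : prefix_count s 0 X = 0%N.
Proof. by rewrite /prefix_count big_pred0. Qed.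

Lemma prefix_countS s t X (ht : (t < n)%N) :
  prefix_count s t.+1 X = (prefix_count s t X + (e (s (Ordinal ht)) \in X))%N.
Proof.
rewrite /prefix_count (bigD1 (Ordinal ht)) //= addnC; congr (_ + _)%N.
by apply: eq_bigl => i; rewrite ltnS -(inj_eq val_inj) /= andbC -ltn_neqAle.
Qed.

Lemma prefix_count_tpermL s t X (a b : 'I_n) : (t <= a)%N -> (t <= b)%N ->
  prefix_count (tperm a b * s)%g t X = prefix_count s t X.
Proof.
move=> ta tb; apply: eq_bigr => i it; rewrite permM tpermD //.
- by rewrite -(inj_eq val_inj) /= neq_ltn (leq_trans it ta) orbT.
- by rewrite -(inj_eq val_inj) /= neq_ltn (leq_trans it tb) orbT.
Qed.

Lemma sum_perm_swap (V : nmodType) (H : 'S_n -> 'I_n -> V) (a b : 'I_n) :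
  (forall s y, H (tperm a b * s)%g y = H s y) ->
  \sum_s H s (s a) = \sum_s H s (s b).
Proof.
move=> Hinv; rewrite (reindex_inj (mulgI (tperm a b))) /=.
by apply: eq_bigr => s _; rewrite Hinv permM tpermL.
Qed.

Hypothesis e_bij : bijective e.

Lemma card_prefix_setI s t X : #|prefix_set e s t :&: X| = prefix_count s t X.
Proof.
have -> : prefix_set e s t :&: X =
    (fun i => e (s i)) @: [set i : 'I_n | (i < t)%N && (e (s i) \in X)].
  apply/setP=> x; rewrite inE; apply/andP/imsetP.
  - by case=> /imsetP[i]; rewrite inE => it -> xX; exists i; rewrite ?inE ?it.
  - case=> i; rewrite inE => /andP[it xX] ->; split=> //.
    by apply/imsetP; exists i; rewrite ?inE.
rewrite card_imset; last by move=> i j /(bij_inj e_bij) /perm_inj.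
rewrite -sum1_card (eq_bigl (fun i : 'I_n => (i < t)%N && (e (s i) \in X))).
  by rewrite big_mkcondr; apply: eq_bigr => i _; case: (e (s i) \in X).
by move=> i; rewrite inE.
Qed.

Lemma sum_mem_perm (s : 'S_n) X : (\sum_(u < n) (e (s u) \in X) = #|X|)%N.
Proof.
rewrite -sum1_card [RHS](reindex (fun u => e (s u))) /=; last first.
  by apply/onW_bij/(bij_comp e_bij)/injF_bij/perm_inj.
by rewrite [RHS]big_mkcond; apply: eq_bigr => u _; case: (e (s u) \in X).
Qed.

Lemma prefix_count_suffix (s : 'S_n) t X :
  (prefix_count s t X + \sum_(u < n | (t <= u)%N) (e (s u) \in X) = #|X|)%N.
Proof.
rewrite -(sum_mem_perm s X) [RHS](bigID (fun u : 'I_n => (u < t)%N)) /=.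
by congr (_ + _)%N; apply: eq_bigl => u; rewrite leqNgt.
Qed.

(* Swapping the positions [t] and [u >= t] preserves the count of the first
   [t] positions, so each later position is hit as often as position [t]. *)
Lemma sum_prefix_deficit_le (P : pred nat) t (ht : (t < n)%N) X :
  (\sum_s (P (prefix_count s t X) * (#|X| - prefix_count s t X)) <=
   n * \sum_s (P (prefix_count s t X) * (e (s (Ordinal ht)) \in X)))%N.
Proof.
set D := (\sum_s _ in X in (_ <= n * X)%N).
have Du (u : 'I_n) : (t <= u)%N ->
    D = (\sum_s P (prefix_count s t X) * (e (s u) \in X))%N.
  move=> tu; rewrite /D.
  apply: (@sum_perm_swap _ (fun s y => P (prefix_count s t X) * (e y \in X))%N).
  by move=> s y; rewrite prefix_count_tpermL.
have -> : (\sum_s P (prefix_count s t X) * (#|X| - prefix_count s t X) =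
    \sum_(u < n | (t <= u)%N) \sum_s P (prefix_count s t X) * (e (s u) \in X))%N.
  rewrite exchange_big /=; apply: eq_bigr => s _.
  by rewrite -big_distrr /= -(prefix_count_suffix s t X) addKn.
rewrite big_mkcond /=; apply: (@leq_trans (\sum_(u < n) D)).
  by apply: leq_sum => u _; case: ifP => // /Du <-.
by rewrite sum_nat_const card_ord.
Qed.

End PrefixCount.

Lemma one_sub_expRN_ge (R : realType) (x : R) : 0 <= x ->
  (1 - (expR 1)^-1) * Num.min x 1 <= 1 - expR (- x).
Proof.
move=> x0; rewrite -expRN; have [x1|x1] := leP x 1.
- have := convex_expR (Itv01 x0 x1) (-1) 0.
  rewrite !convRE /= /unstable.onem expR0 mulr0 mulrN1 addr0 mulr1; lra.
- have : expR (- x) <= expR (-1) by rewrite ler_expR lerN2 ltW.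
  lra.
Qed.

Section Eperm.
Variables (R : realType) (n : nat).
Implicit Types f g : 'S_n -> R.

Lemma Eperm_le f g : (forall s, f s <= g s) -> Eperm f <= Eperm g.
Proof.
move=> fg; rewrite /Eperm ler_wpM2r ?invr_ge0 ?ler0n //.
by apply: ler_sum => s _; exact: fg.
Qed.

Lemma Eperm_sum k (f : 'I_k -> 'S_n -> R) :
  Eperm (fun s => \sum_(l < k) f l s) = \sum_(l < k) Eperm (f l).
Proof. by rewrite /Eperm exchange_big /= mulr_suml. Qed.

Lemma Eperm_cst (c : R) : Eperm (fun _ : 'S_n => c) = c.
Proof. by rewrite /Eperm sumr_const card_Sn -[c *+ _]mulr_natr mulfK. Qed.

Lemma EpermD f g : Eperm (f \+ g) = Eperm f + Eperm g.
Proof. by rewrite /Eperm big_split mulrDl. Qed.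

End Eperm.

Section Rank.
Variables (T : finType) (indep : {set T} -> bool).
Implicit Types (A F X Y : {set T}).

Lemma mrank_mono X Y : X \subset Y -> (mrank indep X <= mrank indep Y)%N.
Proof.
move=> XY; apply/bigmax_leqP => I /andP[indI IX].
by apply: leq_bigmax_cond; rewrite indI (subset_trans IX).
Qed.

Lemma mrank0 : mrank indep set0 = 0%N.
Proof.
apply/eqP; rewrite -leqn0; apply/bigmax_leqP => I /andP[_].
by rewrite subset0 => /eqP ->; rewrite cards0.
Qed.

(* An independent set meets the complement of [F] only in non-loops. *)
Lemma mrank_le_nonloopsD A F :
  (forall I J : {set T}, J \subset I -> indep I -> indep J) ->
  (mrank indep A <= mrank indep F + #|A :&: (~: loops indep :\: F)|)%N.
Proof.
move=> hered; apply/bigmax_leqP => I /andP[indI IA].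
rewrite -(cardsID F I); apply: leq_add.
  by apply: leq_bigmax_cond; rewrite (hered I) ?subsetIl ?subsetIr.
apply: subset_leq_card; apply/subsetP => x; rewrite !inE => /andP[xF xI].
rewrite xF (subsetP IA) //= negbK.
by apply: (hered I) => //; rewrite sub1set.
Qed.

End Rank.

Lemma card_bigcup_disjoint (T : finType) (B : nat -> {set T}) m :
  (forall i j, (i < j < m)%N -> [disjoint B i & B j]) ->
  #|\bigcup_(i < m) B i| = (\sum_(i < m) #|B i|)%N.
Proof.
elim: m => [|m IH] dB; first by rewrite !big_ord0 cards0.
rewrite !big_ord_recr /= -IH => [|i j /andP[ij jm]]; last by rewrite dB // ij ltnW.
apply/eqP; rewrite (leq_card_setU _ _).2 disjoint_sym.
by apply: bigcup_disjoint => i _; rewrite disjoint_sym dB // ltn_ord /=.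
Qed.

Lemma partition_rank_ge (T : finType) k (E : nat -> {set T}) (rk : nat -> nat)
    (A : {set T}) :
  (forall i j, (i < j < k)%N -> [disjoint E i.+1 & E j.+1]) ->
  (\sum_(i < k) minn #|A :&: E i.+1| (rk i.+1) <=
     mrank (partition_indep k E rk) A)%N.
Proof.
move=> dE.
pose B i := [set x in take (rk i.+1) (enum (A :&: E i.+1))].
have BAE i : B i \subset A :&: E i.+1.
  by apply/subsetP => x; rewrite inE => /mem_take; rewrite mem_enum.
have cardB i : #|B i| = minn #|A :&: E i.+1| (rk i.+1).
  have /card_uniqP := take_uniq (rk i.+1) (enum_uniq (mem (A :&: E i.+1))).
  by rewrite cardsE size_take_min -cardE minnC.
rewrite (eq_bigr (fun i : 'I_k => #|B i|)) => [|i _]; last by rewrite cardB.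
rewrite -card_bigcup_disjoint; last first.
  move=> i j ijk; apply: disjointWl (subset_trans (BAE i) (subsetIr _ _)) _.
  exact: disjointWr (subset_trans (BAE j) (subsetIr _ _)) (dE i j ijk).
apply: leq_bigmax_cond; apply/andP; split.
  apply/existsP; exists [ffun i : 'I_k => B i]; apply/andP; split.
    by apply/eqP; apply: eq_bigr => i _; rewrite ffunE.
  apply/forallP => i; rewrite ffunE cardB geq_minr andbT.
  exact: subset_trans (BAE i) (subsetIr _ _).
by apply/bigcupsP => i _; exact: subset_trans (BAE i) (subsetIl _ _).
Qed.

Section RandomPrefix.
Variables (R : realType) (T : finType) (n : nat) (e : 'I_n -> T).
Hypothesis e_bij : bijective e.
Implicit Types (s : 'S_n) (X Y : {set T}).

Lemma card_ground : #|T| = n.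
Proof. by rewrite -(bij_eq_card e_bij) card_ord. Qed.

Lemma sum_card_prefix_setI Y j : (j <= n)%N ->
  (n * \sum_s #|prefix_set e s j :&: Y| = j * (n`! * #|Y|))%N.
Proof.
move=> jn; have [n0|n_gt0] := posnP n.
  have j0 : j = 0%N by apply/eqP; rewrite -leqn0 -n0.
  by rewrite j0 {1}n0 !mul0n.
pose u0 := Ordinal n_gt0.
pose L (u : 'I_n) := (\sum_(s : 'S_n) (e (s u) \in Y))%N.
have Lu u : L u = L u0.
  exact: (@sum_perm_swap _ _ (fun s y => (e y \in Y : nat)) u u0).
have nL : (n * L u0 = n`! * #|Y|)%N.
  have <- : (\sum_(u < n) L u = n`! * #|Y|)%N.
    rewrite exchange_big /= (eq_bigr (fun=> #|Y|)) => [|s _].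
      by rewrite sum_nat_const card_Sn.
    exact: sum_mem_perm.
  rewrite (eq_bigr (fun=> L u0)) => [|u _]; last exact: Lu.
  by rewrite sum_nat_const card_ord.
rewrite (eq_bigr (fun s => prefix_count e s j Y)) => [|s _]; last first.
  exact: card_prefix_setI.
rewrite exchange_big /= (eq_bigr (fun _ => L u0)) => [|u _]; last exact: Lu.
by rewrite (big_ord_narrow jn) sum_nat_const card_ord mulnCA nL.
Qed.

Lemma Eperm_card_prefix_setI Y j : (j <= n)%N -> (0 < n)%N ->
  Eperm (fun s => (#|prefix_set e s j :&: Y|%:R : R)) = j%:R / n%:R * #|Y|%:R.
Proof.
move=> jn n_gt0; have := sum_card_prefix_setI Y jn.
move/(congr1 (fun m => m%:R : R)); rewrite /Eperm !natrM natr_sum => sumE.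
have n0 : n%:R != 0 :> R by rewrite pnatr_eq0 -lt0n.
have f0 : n`!%:R != 0 :> R by rewrite pnatr_eq0 -lt0n fact_gt0.
apply: (mulfI n0); rewrite mulrA sumE; field.
by rewrite n0 f0.
Qed.

(* The subtraction is truncated: [r - c] is the shortfall of [min(c, r)]
   from [r]. *)
Definition trunc_deficit X (r t : nat) : R :=
  \sum_s (r - prefix_count e s t X)%:R.

Lemma trunc_deficit0 X r : trunc_deficit X r 0 = r%:R * n`!%:R.
Proof.
rewrite /trunc_deficit (eq_bigr (fun=> r%:R)) => [|s _]; last first.
  by rewrite prefix_count0 subn0.
by rewrite sumr_const card_Sn mulr_natr.
Qed.

(* Among permutations with [c < r] hits in the first [t] positions, position
   [t] lies in [X] with frequency at least [(|X| - c) / n] (this is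
   [sum_prefix_deficit_le]), and [r (|X| - c) >= |X| (r - c)] as [r <= |X|]. *)
Lemma trunc_deficitS X r t : (t < n)%N -> (0 < r <= #|X|)%N ->
  trunc_deficit X r t.+1 <=
    (1 - #|X|%:R / (r%:R * n%:R)) * trunc_deficit X r t.
Proof.
move=> ht /andP[r_gt0 rX].
set c := fun s => prefix_count e s t X.
set D : R := \sum_s ((c s < r) * (e (s (Ordinal ht)) \in X))%N%:R.
have defS : trunc_deficit X r t = trunc_deficit X r t.+1 + D.
  rewrite /trunc_deficit /D -big_split /=; apply: eq_bigr => s _.
  rewrite prefix_countS -natrD /c; congr _%:R.
  by case: (e _ \in X); case: (ltnP (prefix_count e s t X) r) => /=; lia.
have gain : #|X|%:R * trunc_deficit X r t <= r%:R * n%:R * D.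
  apply: (@le_trans _ _ (r%:R * \sum_s ((c s < r) * (#|X| - c s))%N%:R)).
    rewrite /trunc_deficit !mulr_sumr; apply: ler_sum => s _.
    rewrite -!natrM ler_nat /c.
    by case: (ltnP (prefix_count e s t X) r) => /=; nia.
  rewrite -mulrA ler_wpM2l // /D -!natr_sum -natrM ler_nat.
  exact: (sum_prefix_deficit_le e_bij (fun m => m < r)%N).
have rn_gt0 : 0 < r%:R * n%:R :> R.
  by rewrite -natrM ltr0n muln_gt0 r_gt0 (leq_ltn_trans _ ht).
have qD : #|X|%:R / (r%:R * n%:R) * trunc_deficit X r t <= D.
  by rewrite mulrAC ler_pdivrMr // [D * _]mulrC.
rewrite mulrBl mul1r; lra.
Qed.

Lemma card_div_le1 X r : (0 < r)%N -> (0 < n)%N ->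
  #|X|%:R / (r%:R * n%:R) <= 1 :> R.
Proof.
move=> r_gt0 n_gt0; rewrite ler_pdivrMr ?mul1r; last first.
  by rewrite -natrM ltr0n muln_gt0 r_gt0.
by rewrite -natrM ler_nat -card_ground (leq_trans (max_card _)) // leq_pmull.
Qed.

Lemma trunc_deficit_le X r t : (0 < r <= #|X|)%N -> (t <= n)%N ->
  trunc_deficit X r t <=
    (1 - #|X|%:R / (r%:R * n%:R)) ^+ t * (r%:R * n`!%:R).
Proof.
move=> rX; elim: t => [|t IH] ht; first by rewrite expr0 mul1r trunc_deficit0.
apply: le_trans (trunc_deficitS ht rX) _; rewrite exprS -mulrA.
apply: ler_wpM2l; last exact: IH (ltnW ht).
by case/andP: rX => r_gt0 _; rewrite subr_ge0 card_div_le1 // (leq_ltn_trans _ ht).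
Qed.

Lemma Eperm_minn_card_prefix_setI X r j :
  Eperm (fun s => (minn #|prefix_set e s j :&: X| r)%:R) =
    r%:R - trunc_deficit X r j / n`!%:R.
Proof.
have f0 : n`!%:R != 0 :> R by rewrite pnatr_eq0 -lt0n fact_gt0.
rewrite /Eperm /trunc_deficit -[r%:R in RHS](mulfK f0) -mulrBl.
congr (_ / _); rewrite mulr_natr -card_Sn -sumr_const -sumrB.
apply: eq_bigr => s _; rewrite card_prefix_setI // minnC minnE natrB //.
exact: leq_subr.
Qed.

(* [(1 - q)^j <= exp (- q j)] with [q = |X| / (r n)], followed by
   [one_sub_expRN_ge] at [x = q j]. *)
Lemma Eperm_trunc_card_ge X r j : (0 < r <= #|X|)%N -> (j <= n)%N ->
  (1 - (expR (1 : R))^-1) * Num.min (j%:R / n%:R * #|X|%:R) r%:R <=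
    Eperm (fun s => (minn #|prefix_set e s j :&: X| r)%:R).
Proof.
move=> rX jn; have /andP[r_gt0 r_le] := rX.
have n_gt0 : (0 < n)%N.
  by rewrite -card_ground (leq_trans r_gt0 (leq_trans r_le (max_card _))).
have rR : 0 < r%:R :> R by rewrite ltr0n.
have nR : 0 < n%:R :> R by rewrite ltr0n.
have fR : 0 < n`!%:R :> R by rewrite ltr0n fact_gt0.
pose q : R := #|X|%:R / (r%:R * n%:R).
have q_ge0 : 0 <= q by rewrite divr_ge0 ?ler0n.
have q_le1 : q <= 1 := card_div_le1 X r_gt0 n_gt0.
have decay : (1 - q) ^+ j <= expR (- (q * j%:R)).
  rewrite -[- (q * _)]mulNr expRM_natr lerXn2r ?nnegrE ?subr_ge0 ?expR_ge0 //.
  by rewrite -[1 - q]/(1 + - q) expR_ge1Dx.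
have Ebound : r%:R * (1 - expR (- (q * j%:R))) <=
    Eperm (fun s => (minn #|prefix_set e s j :&: X| r)%:R).
  have : trunc_deficit X r j / n`!%:R <= (1 - q) ^+ j * r%:R.
    by rewrite ler_pdivrMr // -mulrA trunc_deficit_le.
  have : (1 - q) ^+ j * r%:R <= expR (- (q * j%:R)) * r%:R.
    by rewrite ler_wpM2r ?ler0n.
  rewrite Eperm_minn_card_prefix_setI; lra.
have -> : j%:R / n%:R * #|X|%:R = r%:R * (q * j%:R).
  by rewrite /q; field; rewrite !lt0r_neq0.
rewrite -[X in Num.min _ X]mulr1 -minr_pMr ?ler0n // mulrCA.
apply: le_trans Ebound; rewrite ler_wpM2l ?ler0n // one_sub_expRN_ge //.
exact: mulr_ge0.
Qed.

Lemma Eperm_mrank_le (indep : {set T} -> bool) (F : {set T}) j :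
  (forall I J : {set T}, J \subset I -> indep I -> indep J) ->
  (j <= n)%N -> (0 < n)%N ->
  Eperm (fun s => (mrank indep (prefix_set e s j))%:R) <=
    (mrank indep F)%:R + j%:R / n%:R * #|~: loops indep :\: F|%:R :> R.
Proof.
move=> hered jn n_gt0; rewrite -(Eperm_card_prefix_setI _ jn n_gt0).
rewrite -[X in X + _](Eperm_cst n) -EpermD; apply: Eperm_le => s /=.
by rewrite -natrD ler_nat mrank_le_nonloopsD.
Qed.

Lemma Eperm_partition_rank_ge k (E : nat -> {set T}) (rk : nat -> nat) j :
  (forall a b, (a < b < k)%N -> [disjoint E a.+1 & E b.+1]) ->
  (forall l, (l < k)%N -> (0 < rk l.+1 <= #|E l.+1|)%N) -> (j <= n)%N ->
  (1 - (expR (1 : R))^-1) *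
    \sum_(l < k) Num.min (j%:R / n%:R * #|E l.+1|%:R) (rk l.+1)%:R <=
  Eperm (fun s => (mrank (partition_indep k E rk) (prefix_set e s j))%:R).
Proof.
move=> dE rkE jn; rewrite mulr_sumr.
apply: (@le_trans _ _ (Eperm (fun s => \sum_(l < k)
    (minn #|prefix_set e s j :&: E l.+1| (rk l.+1))%:R))).
  rewrite Eperm_sum; apply: ler_sum => l _.
  by apply: Eperm_trunc_card_ge; rewrite ?rkE.
by apply: Eperm_le => s; rewrite -natr_sum ler_nat partition_rank_ge.
Qed.

End RandomPrefix.

Lemma exists_threshold (P : pred nat) k :
  (forall l m, (l <= m < k)%N -> P m -> P l) ->
  exists2 i, (i <= k)%N &
    (forall l, (l < i)%N -> P l) /\ (forall l, (i <= l < k)%N -> ~~ P l).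
Proof.
move=> Pdown; pose i := find (predC P) (iota 0 k).
have ik : (i <= k)%N by rewrite -[k in (_ <= k)%N](size_iota 0) find_size.
have Pbefore l : (l < i)%N -> P l.
  move=> li; have := before_find 0%N li.
  by rewrite nth_iota ?add0n /= => [/negbFE|]; last exact: leq_trans li ik.
exists i => //; split=> // l /andP[il lk]; apply/negP => Pl.
have hasNP : has (predC P) (iota 0 k).
  by rewrite has_find size_iota (leq_ltn_trans il lk).
have := nth_find 0%N hasNP; rewrite -/i nth_iota ?add0n /=.
  by rewrite (Pdown i l) ?il.
by rewrite (leq_ltn_trans il lk).
Qed.

Lemma sum_min_split (R : realDomainType) (a b : nat -> R) k i : (i <= k)%N ->
  (forall l, (l < i)%N -> b l <= a l) -> (forall l, (i <= l < k)%N -> a l <= b l) ->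
  \sum_(l < k) Num.min (a l) (b l) = \sum_(0 <= l < i) b l + \sum_(i <= l < k) a l.
Proof.
move=> ik ba ab; rewrite -(big_mkord xpredT (fun l => Num.min (a l) (b l))).
rewrite (big_cat_nat (leq0n i) ik) /=.
congr (_ + _); apply: eq_big_nat => l lP.
  by rewrite min_r // ba.
by rewrite min_l // ab.
Qed.

Section PrincipalSequence.
Variables (R : realType) (T : finType) (r : {set T} -> nat) (S : {set T}).
Variables (k : nat) (F : nat -> {set T}) (lam : nat -> R).
Hypothesis r_mono : forall X Y : {set T}, X \subset Y -> (r X <= r Y)%N.
Hypothesis r0 : r set0 = 0%N.
Hypothesis PS : principal_sequence S r k F lam.

Local Notation E := (minor_ground F).
Local Notation rk l := (minor_rank r F l (minor_ground F l)).

Lemma principal_mono a b : (a <= b <= k)%N -> F a \subset F b.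
Proof.
case: PS => [[_ _ Fproper _] _] /andP[]; elim: b => [|b IH] ab bk.
  by move: ab; rewrite leqn0 => /eqP ->.
move: ab; rewrite leq_eqVlt => /orP[/eqP -> //|ab].
exact: subset_trans (IH ab (ltnW bk)) (proper_sub (Fproper b bk)).
Qed.

Lemma principal_pred_sub l : (l <= k)%N -> F l.-1 \subset F l.
Proof. by move=> lk; apply: principal_mono; rewrite leq_pred. Qed.

Lemma minor_rankE l : (l <= k)%N -> rk l = (r (F l) - r (F l.-1))%N.
Proof.
move=> lk; rewrite /minor_rank /minor_ground setDE setUIl [~: _ :|: _]setUC.
by rewrite setUCr setIT (setUidPl (principal_pred_sub lk)).
Qed.

Lemma card_minor_ground l : (l <= k)%N -> #|E l| = (#|F l| - #|F l.-1|)%N.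
Proof. by move=> lk; rewrite cardsD (setIidPr (principal_pred_sub lk)). Qed.

Lemma minor_rank_natrE l : (l <= k)%N ->
  (rk l)%:R = (r (F l))%:R - (r (F l.-1))%:R :> R.
Proof. by move=> lk; rewrite minor_rankE // natrB // r_mono // principal_pred_sub. Qed.

Lemma card_minor_ground_natrE l : (l <= k)%N ->
  #|E l|%:R = #|F l|%:R - #|F l.-1|%:R :> R.
Proof.
move=> lk; rewrite card_minor_ground // natrB //.
by rewrite subset_leq_card // principal_pred_sub.
Qed.

(* [F l.-1] and [F l] are both minimizers of [f_(lam l)], so they give it the
   same value. *)
Lemma card_minor_groundE l : (0 < l <= k)%N -> #|E l|%:R = lam l * (rk l)%:R.
Proof.
move=> lP; have lk : (l <= k)%N by case/andP: lP.
case: PS => _ [_ [_ mins]]; have [[sub1 min1] [sub2 min2] _] := mins l lP.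
have := min1 (F l) sub2; have := min2 (F l.-1) sub1; rewrite /flam.
rewrite card_minor_ground_natrE // minor_rank_natrE //; lra.
Qed.

Lemma card_minor_ground_gt0 l : (0 < l <= k)%N -> (0 < #|E l|)%N.
Proof.
case/andP=> l_gt0 lk; rewrite card_minor_ground // subn_gt0 proper_card //.
by case: PS => [[_ _ Fproper _] _]; rewrite -{2}(prednK l_gt0) Fproper // prednK.
Qed.

Lemma lam_antimono l m : (0 < l <= m)%N -> (m <= k)%N -> lam m <= lam l.
Proof.
case: PS => [[_ _ _ lamdec] _] /andP[l_gt0]; elim: m => [|m IH] lm mk.
  by move: l_gt0; rewrite lt0n -leqn0 lm.
move: lm; rewrite leq_eqVlt => /orP[/eqP -> //|lm].
apply: le_trans (IH lm (ltnW mk)); apply/ltW/lamdec => //.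
exact: leq_trans l_gt0 lm.
Qed.

Lemma lam_ge1 l : (0 < l <= k)%N -> 1 <= lam l.
Proof.
case/andP=> l_gt0 lk; case: PS => _ [lamk _].
by apply: le_trans (lamk (leq_trans l_gt0 lk)) (lam_antimono _ _); rewrite ?l_gt0.
Qed.

Lemma minor_rank_gt0 l : (0 < l <= k)%N -> (0 < rk l)%N.
Proof.
move=> lP; rewrite lt0n; apply: contraTneq (card_minor_ground_gt0 lP) => rk0.
by rewrite -(ltr_nat R) card_minor_groundE // rk0 mulr0 ltxx.
Qed.

Lemma minor_rank_le_card l : (0 < l <= k)%N -> (rk l <= #|E l|)%N.
Proof.
move=> lP; rewrite -(ler_nat R) card_minor_groundE //.
by rewrite ler_peMl ?ler0n ?lam_ge1.
Qed.

Lemma disjoint_minor_ground a b : (a < b <= k)%N -> [disjoint E a & E b].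
Proof.
case/andP=> ab bk; have sub : F a \subset F b.-1.
  apply: principal_mono; rewrite (leq_trans (leq_pred b) bk) andbT.
  by rewrite -ltnS (ltn_predK ab).
rewrite -setI_eq0; apply/eqP/setP => x; rewrite !inE.
by apply/negbTE/andP => -[/andP[_ /(subsetP sub) xb] /andP[/negP]].
Qed.

(* Since [r_l / |E_l| = 1 / lam l] increases with [l], the indices where the
   rank cap [r_l] is the smaller term form an initial segment. *)
Lemma principal_sum_min (p : R) : 0 <= p -> exists2 i, (i <= k)%N &
  \sum_(l < k) Num.min (p * #|E l.+1|%:R) (rk l.+1)%:R =
    (r (F i))%:R + p * #|S :\: F i|%:R.
Proof.
move=> p_ge0; pose P l := (rk l.+1)%:R <= p * #|E l.+1|%:R.
have Pdown l m : (l <= m < k)%N -> P m -> P l.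
  case/andP=> lm mk; have lk : (l < k)%N := leq_ltn_trans lm mk.
  rewrite /P !card_minor_groundE // !mulrA => Pm.
  have rk_gt0 : 0 < (rk m.+1)%:R :> R by rewrite ltr0n minor_rank_gt0.
  have plam : 1 <= p * lam m.+1 by rewrite -(ler_pM2r rk_gt0) mul1r.
  by rewrite ler_peMl ?ler0n // (le_trans plam) // ler_wpM2l // lam_antimono.
have [i ik [Pi NPi]] := exists_threshold Pdown.
exists i => //; rewrite (sum_min_split ik Pi) => [|l /NPi]; last first.
  by rewrite /P -ltNge => /ltW.
congr (_ + _).
  rewrite (telescope_sumr_eq (fun l => (r (F l))%:R)) // => [|l /andP[_ li]].
    by case: PS => [[-> _ _ _] _]; rewrite r0 subr0.
  by rewrite minor_rank_natrE // (leq_trans li ik).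
have Fik : F i \subset F k by rewrite principal_mono // ik leqnn.
rewrite -mulr_sumr (telescope_sumr_eq (fun l => #|F l|%:R)) // => [|l /andP[_ lk]].
  case: PS => [[_ <- _ _] _].
  by rewrite cardsD (setIidPr Fik) natrB // subset_leq_card.
by rewrite card_minor_ground_natrE.
Qed.

End PrincipalSequence.

Theorem lemma7 (R : realType) (T : finType) (indep : {set T} -> bool)
  (n : nat) (e : 'I_n -> T) (k : nat) (F : nat -> {set T}) (lam : nat -> R) :
  is_matroid indep ->
  bijective e ->
  principal_sequence (~: loops indep) (mrank indep) k F lam ->
  forall j : nat, (1 <= j <= n)%N ->
    (1 - (expR (1 : R))^-1) *
      Eperm (fun s => (mrank indep (prefix_set e s j))%:R)
    <= Eperm (fun s =>
         (mrank (partition_indep k (minor_ground F)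
                   (fun i => minor_rank (mrank indep) F i (minor_ground F i)))
                (prefix_set e s j))%:R).
Proof.
case=> _ hered _ e_bij PS j /andP[j_ge1 jn].
have n_gt0 : (0 < n)%N := leq_trans j_ge1 jn.
have p_ge0 : 0 <= j%:R / n%:R :> R by rewrite divr_ge0 ?ler0n.
have r_mono := mrank_mono indep.
have [i ik sumE] := principal_sum_min r_mono (mrank0 indep) PS p_ge0.
apply: le_trans (Eperm_partition_rank_ge R e_bij _ _ jn).
- rewrite sumE ler_wpM2l ?Eperm_mrank_le //.
  rewrite subr_ge0 invf_le1 ?expR_gt0 //.
  by apply: le_trans (expR_ge1Dx 1); rewrite lerDr.
- by move=> a b abk; apply: (disjoint_minor_ground PS); rewrite ltnS.
- move=> l lk.
  by rewrite (minor_rank_gt0 r_mono PS) ?(minor_rank_le_card r_mono PS).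
Qed.
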